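(* In the setting described in the context, let $i\in[m]$, $S\subseteq[k]$ and $t\in[k]\setminus S$. Then $$\big\|\mathsf{P}_{Y_i}\mathsf{P}_{\Omega_{-i}Z|W,Y_i^S=\perp^S,Y_i^{\overline{S}}}-\mathsf{P}_{Y_i}\mathsf{P}_{\Omega_{-i}Z|W,Y_i^{S\cup\{t\}}=\perp^{S\cup\{t\}},Y_i^{\overline{S}\setminus\{t\}}}\big\|\le 2\alpha^{-(|S|+1)}\big\|\mathsf{P}_{Y_i}\mathsf{P}_{Z\Omega_{-i}|W,Y_i}-\mathsf{P}_{Y_i}\mathsf{P}_{Z\Omega_{-i}|W,Y_i^{-t}}\big\|.$$
   Context: Let $G=(\mathcal{X},\mathcal{A},\mu,V)$ be a $k$-player game: $\mathcal{X}=\mathcal{X}^1\times\cdots\times\mathcal{X}^k$, $\mathcal{A}=\mathcal{A}^1\times\cdots\times\mathcal{A}^k$ finite, $\mu$ a distribution on $\mathcal{X}$, $V:\mathcal{X}\times\mathcal{A}\to\{0,1\}$. Assume $G$ is $\alpha$-anchored ($0<\alpha\le1$) with anchor sets $\mathcal{X}^t_\perp\subseteq\mathcal{X}^t$: the marginal probability that $x^t\in\mathcal{X}^t_\perp$ is at least $\alpha$ for each $t$, and $\mu(x)=\mu(x|_{\overline{F}_x})\prod_{t\in F_x}\mu(x^t)$ for all $x$, where $F_x=\{t:x^t\in\mathcal{X}^t_\perp\}$, $\overline F_x=[k]\setminus F_x$, and $\mu(x|_S)$, $\mu(x^t)$ are marginals. Fix $n$, integers $1\le m<n$, $C=\{m+1,\dots,n\}$,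 and a deterministic strategy for $G^n$, i.e. functions $f^t:(\mathcal{X}^t)^n\to(\mathcal{A}^t)^n$. Let $X=(X_1,\dots,X_n)$, $X_i=(X_i^1,\dots,X_i^k)$, be distributed as $\mu^{\otimes n}$, let $(A_1^t,\dots,A_n^t)=f^t(X_1^t,\dots,X_n^t)$, $A_i=(A_i^1,\dots,A_i^k)$, and $Z=(A_j)_{j\in C}$. Let $W$ be the event that $V(X_j,A_j)=1$ for all $j\in C$, with $\Pr(W)>0$. For each $i,t$ let $Y_i^t=X_i^t$ if $X_i^t\notin\mathcal{X}^t_\perp$ and $Y_i^t=\perp$ otherwise; $Y_i=(Y_i^1,\dots,Y_i^k)$; for $S\subseteq[k]$, $Y_i^S=(Y_i^s)_{s\in S}$, $\overline S=[k]\setminus S$, $\perp^S$ is the all-$\perp$ tuple indexed by $S$, and $Y_i^{-t}=Y_i^{[k]\setminus\{t\}}$. For $i\in[m]$ let $D_i$ be a uniformly random subset of $[k]$ of size $k-1$, independent of each other and of $X$; $M_i=Y_i^{D_i}$, $\Omega_i=(D_i,M_i)$; for $j\in C$, $\Omega_j=X_j$. $\Omega_{-i}$ is $(\Omega_1,\dots,\Omega_n)$ with $\Omega_i$ omitted. Notation: for random variables $R\subseteq$ components of $Y_i$, $\mathsf{P}_{Y_i}\mathsf{P}_{\Omega_{-i}Z|W,Y_i^{S}=\perp^S,Y_i^{T}}$ denotes the distribution $(y,\omega,z)\mapsto\mathsf{P}_{Y_i}(y)\,\mathsf{P}_{\Omega_{-i}Z|W,Y_i^S=\perp^S,Y_i^{T}=y^{T}}(\omega,z)$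 (and similarly with no fixed part); $\|\cdot\|$ is total variation distance. *)

From mathcomp Require Import all_boot all_order all_algebra.
Unset Printing Implicit Defensive.
Import Order.TTheory GRing.Theory Num.Theory.
Local Open Scope ring_scope.

(* Rounds are indexed by 'I_n (round j is
   the paper's round j+1); the paper's [m] = rounds j < m, C = rounds j >= m. *)

Section Game.
Context {R : realFieldType} {k : nat} (Xt At : 'I_k -> finType).

Definition Xq : finType := {dffun forall t : 'I_k, Xt t}.
Definition Aq : finType := {dffun forall t : 'I_k, At t}.
(* values of Y_i : coordinate t is None (= bottom) or Some x^t *)
Definition Yq : finType := {dffun forall t : 'I_k, option (Xt t)}.

Definition is_distr (mu : Xq -> R) : Prop :=
  (forall x, 0 <= mu x) /\ \sum_(x : Xq) mu x = 1.

Definition marg_on (mu : Xq -> R) (T : {set 'I_k}) (x : Xq) : R :=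
  \sum_(x' : Xq | [forall s in T, x' s == x s]) mu x'.

Definition marg1 (mu : Xq -> R) (t : 'I_k) (a : Xt t) : R :=
  \sum_(x' : Xq | x' t == a) mu x'.

Definition anchor_players (anc : forall t, {set Xt t}) (x : Xq) : {set 'I_k} :=
  [set t | x t \in anc t].

Definition anchored (mu : Xq -> R) (anc : forall t, {set Xt t}) (alpha : R) : Prop :=
  [/\ 0 < alpha <= 1,
      (forall t, alpha <= \sum_(x : Xq | x t \in anc t) mu x) &
      (forall x, mu x = marg_on mu (~: anchor_players anc x) x *
                        \prod_(t in anchor_players anc x) marg1 mu t (x t))].

Definition tvd (T : finType) (P Q : T -> R) : R :=
  2^-1 * \sum_(p : T) `|P p - Q p|.

Section Repetition.
Context (n m : nat) (mu : Xq -> R) (anc : forall t, {set Xt t})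
        (V : Xq -> Aq -> bool)
        (f : forall t : 'I_k, {ffun 'I_n -> Xt t} -> {ffun 'I_n -> At t}).

(* sample space: questions of all n rounds, and the sets D_i for i in [m] *)
Definition Omega : finType :=
  ({ffun 'I_n -> Xq} * {ffun 'I_m -> {set 'I_k}})%type.

Definition Dweight (D : {set 'I_k}) : R :=
  if #|D| == k.-1 then (#|[set D' : {set 'I_k} | #|D'| == k.-1]|%:R)^-1 else 0.

Definition weight (w : Omega) : R :=
  (\prod_(j : 'I_n) mu (w.1 j)) * \prod_(i : 'I_m) Dweight (w.2 i).

Definition Pr (E : pred Omega) : R := \sum_(w : Omega | E w) weight w.

Definition qs (w : Omega) (t : 'I_k) : {ffun 'I_n -> Xt t} :=
  [ffun j => w.1 j t].

Definition ans (w : Omega) (j : 'I_n) : Aq :=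
  finfun (fun t : 'I_k => f t (qs w t) j).

Definition Yv (w : Omega) (j : 'I_n) : Yq :=
  finfun (fun t : 'I_k => if w.1 j t \in anc t then None else Some (w.1 j t)).

(* D_j (only meaningful for j < m) *)
Definition Dv (w : Omega) (j : 'I_n) : {set 'I_k} :=
  oapp (fun j' : 'I_m => w.2 j') set0 (insub (val j)).

(* value of Omega_j : inl (D_j, M_j) for j in [m] (M_j = Y_j^{D_j}, encoded
   as Some (Y_j^s) for s in D_j, None otherwise), inr X_j for j in C *)
Definition OmVal : finType :=
  ({set 'I_k} * {dffun forall t : 'I_k, option (option (Xt t))} + Xq)%type.

Definition Om (w : Omega) (j : 'I_n) : OmVal :=
  if (j < m)%N then
    inl (Dv w j, finfun (fun t : 'I_k =>
                   if t \in Dv w j then Some (Yv w j t) else None))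
  else inr (w.1 j).

Definition Om_dummy : OmVal := inl (set0, finfun (fun t : 'I_k => None)).

Definition OZVal : finType :=
  ({ffun 'I_n -> OmVal} * {ffun 'I_n -> option Aq})%type.

Definition OZ (i : 'I_n) (w : Omega) : OZVal :=
  ([ffun j => if j == i then Om_dummy else Om w j],
   [ffun j : 'I_n => if (m <= j)%N then Some (ans w j) else None]).

Definition Wev (w : Omega) : bool :=
  [forall j : 'I_n, (m <= j)%N ==> V (w.1 j) (ans w j)].

Definition PY (i : 'I_n) (y : Yq) : R := Pr [pred w | Yv w i == y].

Definition condEv (i : 'I_n) (S T : {set 'I_k}) (y : Yq) (w : Omega) : bool :=
  [&& Wev w, [forall s in S, Yv w i s == None] &
             [forall s in T, Yv w i s == y s]].

(* P_{Omega_{-i} Z | W, Y_i^S = bot^S, Y_i^T = y^T}(v)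
   (conditioning on a null event yields 0, the MathComp convention x/0 = 0) *)
Definition Pcond (i : 'I_n) (S T : {set 'I_k}) (y : Yq) (v : OZVal) : R :=
  Pr [pred w | condEv i S T y w && (OZ i w == v)] / Pr (condEv i S T y).

Definition mixture (i : 'I_n) (S T : {set 'I_k}) (p : (Yq * OZVal)%type) : R :=
  PY i p.1 * Pcond i S T p.1 p.2.

End Repetition.
End Game.

Arguments is_distr {R k Xt} mu.
Arguments anchored {R k Xt} mu anc alpha.
Arguments tvd {R T} P Q.
Arguments Pr {R k Xt n} m mu E.
Arguments Wev {k Xt At n} m V f w.
Arguments mixture {R k Xt At n} m mu anc V f i S T p.

From mathcomp Require Import all_boot all_order all_algebra perm ring lra.
Import Order.TTheory GRing.Theory Num.Theory.
Local Open Scope ring_scope.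

(* The anchoring identity makes the event "x^s is an anchor" independent of
   every event that does not look at x^s, with probability at least alpha.
   Erasing |S| coordinates of Y_i to bottom therefore loses at most a factor
   alpha^|S| of probability mass, so reweighting P_{Y_i} by y |-> y with S
   erased inflates any nonnegative expectation by at most alpha^-|S|.
   The two conditional laws on the left depend on y only through y with S,
   resp. S u {t}, erased, and those two erasures agree off t; comparing both
   with the law conditioned on Y_i^{-t} and using the triangle inequality
   gives the bound with alpha^-|S| + alpha^-(|S|+1) <= 2 alpha^-(|S|+1). *)

Lemma andb_eqr (T : eqType) (P : pred T) (a b : T) :
  P b -> (P a && (a == b)) = (a == b).
Proof. by move=> Pb; case: (a =P b) => [->|]; rewrite ?andbT ?andbF ?Pb. Qed.

Section Coordinates.
Context {k : nat} (Xt : 'I_k -> finType).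

Definition upd (x : Xq Xt) (s : 'I_k) (c : Xt s) : Xq Xt :=
  finfun (dfwith (x : forall t, Xt t) c).

Lemma upd_in x s c : upd x s c s = c.
Proof. by rewrite /upd ffunE dfwith_in. Qed.

Lemma upd_out x s c t : t != s -> upd x s c t = x t.
Proof. by move=> ne; rewrite /upd ffunE dfwith_out // eq_sym. Qed.

Lemma upd_upd x s a b : upd (upd x s a) s b = upd x s b.
Proof.
apply/ffunP => t; case: (eqVneq t s) => [->|ne]; first by rewrite !upd_in.
by rewrite !upd_out.
Qed.

Lemma upd_id x s : upd x s (x s) = x.
Proof.
apply/ffunP => t; case: (eqVneq t s) => [->|ne]; first by rewrite !upd_in.
by rewrite !upd_out.
Qed.

Definition agree_on (T : {set 'I_k}) (g x : Xq Xt) := [forall t in T, x t == g t].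

Lemma agree_onP (T : {set 'I_k}) (g x : Xq Xt) :
  reflect (forall t, t \in T -> x t = g t) (agree_on T g x).
Proof.
apply: (iffP forall_inP) => H t tT; first by apply/eqP; apply: H.
by apply/eqP; apply: H.
Qed.

Lemma eq_agree_on (T : {set 'I_k}) (g g' x : Xq Xt) :
  (forall t, t \in T -> g t = g' t) -> agree_on T g x = agree_on T g' x.
Proof.
move=> H; apply/agree_onP/agree_onP => H' t tT; first by rewrite H' // H.
by rewrite H' // H.
Qed.

Lemma agree_on_setCT (g x : Xq Xt) : agree_on (~: set0) g x = (x == g).
Proof.
apply/agree_onP/eqP => [H | ->] //; apply/ffunP => t; apply: H; by rewrite !inE.
Qed.

Lemma agree_on_updl (A : {set 'I_k}) a (c : Xt a) (g x : Xq Xt) : a \in A ->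
  agree_on (~: (A :\ a)) (upd g a c) x = agree_on (~: A) g x && (x a == c).
Proof.
move=> aA; apply/agree_onP/andP => [H | [/agree_onP H /eqP xa] t].
  split.
    apply/agree_onP => t; rewrite inE => tA.
    have ta : t != a by apply: contraNneq tA => ->.
    by rewrite H ?upd_out // !inE ta.
  by apply/eqP; rewrite H ?upd_in // !inE eqxx.
rewrite !inE negb_and negbK => /orP [/eqP e | tA].
  by subst t; rewrite upd_in.
have ta : t != a by apply: contraNneq tA => ->.
by rewrite upd_out // H // inE.
Qed.

Lemma agree_on_updr (B : {set 'I_k}) s (d : Xt s) (g x : Xq Xt) : s \notin B ->
  agree_on B g (upd x s d) = agree_on B g x.
Proof.
move=> sB; apply/agree_onP/agree_onP => H t tB;
  have ts : t != s by apply: contraNneq sB => <-.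
  by rewrite -H // upd_out.
by rewrite upd_out // H.
Qed.

Definition erase (S : {set 'I_k}) (y : Yq Xt) : Yq Xt :=
  finfun (fun t => if t \in S then None else y t).

Lemma eraseE (S : {set 'I_k}) (y : Yq Xt) s :
  erase S y s = if s \in S then None else y s.
Proof. by rewrite ffunE. Qed.

Lemma erase_set0 (y : Yq Xt) : erase set0 y = y.
Proof. by apply/ffunP => t; rewrite eraseE inE. Qed.

Lemma erase_setD1_None (S : {set 'I_k}) s (y : Yq Xt) :
  y s = None -> erase (S :\ s) y = erase S y.
Proof.
move=> ys; apply/ffunP => t; rewrite !eraseE in_setD1.
by case: (eqVneq t s) => [->|] /=; rewrite ?ys ?if_same.
Qed.

Lemma erase_setD1 (S : {set 'I_k}) s (y a : Yq Xt) : a s = None ->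
  (erase (S :\ s) y == a) = (y s == None) && (erase S y == a).
Proof.
move=> as0; apply/eqP/andP => [e | [/eqP ys /eqP <-]]; last exact: erase_setD1_None.
have ys : y s = None by rewrite -as0 -e eraseE setD11.
by rewrite ys -(erase_setD1_None S s y ys) e.
Qed.

End Coordinates.
Arguments upd {k Xt} x s c.
Arguments erase {k Xt} S y.
Arguments agree_on {k Xt} T g x.
Arguments eq_agree_on {k Xt} T g g' x.

Section Sums.
Context {R : realFieldType} {k : nat} (Xt : 'I_k -> finType).

Lemma sum_fiber_upd (F : Xq Xt -> R) s (c c0 : Xt s) :
  \sum_(x : Xq Xt | x s == c) F x = \sum_(x : Xq Xt | x s == c0) F (upd x s c).
Proof.
pose swap (x : Xq Xt) := upd x s (tperm c0 c (x s)).
have swapK : involutive swap by move=> x; rewrite /swap upd_upd upd_in tpermK upd_id.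
rewrite (reindex_inj (can_inj swapK)) /=.
apply: eq_big => x; first by rewrite /swap upd_in (can2_eq (tpermK _ _) (tpermK _ _)) tpermR.
by move=> /eqP; rewrite /swap upd_in => ->.
Qed.

Lemma sum_agree_on_prod (A : {set 'I_k}) (g : Xq Xt) (h : forall t, Xt t -> R) :
  \sum_(x : Xq Xt | agree_on (~: A) g x) \prod_(t in A) h t (x t)
  = \prod_(t in A) \sum_(c : Xt t) h t c.
Proof.
move: {2}#|A| (erefl #|A|) => n; elim: n A g => [|n IH] A g cA.
  have -> : A = set0 by apply/eqP; rewrite -cards_eq0 cA.
  rewrite big_set0 (eq_bigl (fun x => x == g)) => [|x]; last exact: agree_on_setCT.
  by rewrite big_pred1_eq big_set0.
have [a aA] : exists a, a \in A by apply/set0Pn; rewrite -cards_eq0 cA.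
have cA' : #|A :\ a| = n by move: cA; rewrite (cardsD1 a A) aA add1n => -[].
rewrite (bigD1 a aA) /=.
rewrite (eq_bigl (fun t => t \in A :\ a)) => [|t]; last by rewrite in_setD1 andbC.
rewrite (partition_big (fun x : Xq Xt => x a) predT) //= big_distrl /=.
apply: eq_bigr => c _.
rewrite -(IH (A :\ a) (upd g a c) cA') big_distrr /=.
apply: eq_big => [x|x /andP [_ /eqP xa]]; first by rewrite agree_on_updl.
rewrite (bigD1 a aA) /= xa; congr (_ * _); apply: eq_bigl => t.
by rewrite in_setD1 andbC.
Qed.

Lemma sum_andb_nat (P Q : pred (Xq Xt)) (F : Xq Xt -> R) :
  \sum_(x | P x && Q x) F x = \sum_(x | P x) F x * (Q x)%:R.
Proof.
rewrite big_mkcondr; apply: eq_bigr => x _.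
by case: (Q x); rewrite ?mulr1 ?mulr0.
Qed.

End Sums.
Arguments sum_fiber_upd {R k Xt} F s c c0.

Section Anchored.
Context {R : realFieldType} {k : nat} (Xt : 'I_k -> finType)
  (mu : Xq Xt -> R) (anc : forall t, {set Xt t}).
Hypothesis mu_ge0 : forall x, 0 <= mu x.
Hypothesis mu_sum : \sum_x mu x = 1.
Hypothesis mu_anchored : forall x,
  mu x = marg_on Xt mu (~: anchor_players Xt anc x) x *
         \prod_(t in anchor_players Xt anc x) marg1 Xt mu t (x t).

Local Notation Fp := (anchor_players Xt anc).
Local Notation M := (marg_on Xt mu).
Local Notation m1 := (marg1 Xt mu).

Definition anchor_mass s := \sum_(x : Xq Xt | x s \in anc s) mu x.

Lemma marg1_ge0 t c : 0 <= m1 t c.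
Proof. by apply: sumr_ge0 => x _. Qed.

Lemma anchor_massE s : anchor_mass s = \sum_(c | c \in anc s) m1 s c.
Proof.
rewrite /anchor_mass (partition_big (fun x : Xq Xt => x s) (fun c => c \in anc s)) //=.
apply: eq_bigr => c cA; apply: eq_bigl => x; exact: andb_eqr.
Qed.

Lemma anchor_mass_ge0 s : 0 <= anchor_mass s.
Proof. exact: sumr_ge0. Qed.

Lemma anchor_mass_le1 s : anchor_mass s <= 1.
Proof.
rewrite -mu_sum /anchor_mass [X in _ <= X](bigID (fun x : Xq Xt => x s \in anc s)) /=.
by rewrite lerDl; apply: sumr_ge0.
Qed.

Section OneAnchor.
Variables (s : 'I_k) (c0 : Xt s).
Hypothesis c0_anc : c0 \in anc s.

Local Notation pin x := (upd x s c0).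

Definition other_anchor_prod (x : Xq Xt) :=
  \prod_(t in Fp (pin x) :\ s) m1 t (pin x t).

Definition anchor_factor (x : Xq Xt) :=
  M (~: Fp (pin x)) (pin x) * other_anchor_prod x.

Definition anchored_mass (B : {set 'I_k}) (g : Xq Xt) :=
  \sum_(x : Xq Xt | (x s \in anc s) && agree_on B g x) mu x.

(* Zero exactly when "x^s is an anchor" is independent of "x agrees with g
   on B". *)
Definition indep_defect (B : {set 'I_k}) (g : Xq Xt) :=
  anchor_mass s * M B g - anchored_mass B g.

Lemma anchor_factor_upd (x : Xq Xt) d : anchor_factor (upd x s d) = anchor_factor x.
Proof. by rewrite /anchor_factor /other_anchor_prod upd_upd. Qed.

Lemma anchor_players_pin (x : Xq Xt) : s \in Fp (pin x).
Proof. by rewrite inE upd_in. Qed.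

Lemma mu_anchor (x : Xq Xt) : x s \in anc s -> mu x = m1 s (x s) * anchor_factor x.
Proof.
move=> xa; have eF : Fp x = Fp (pin x).
  apply/setP => t; rewrite !inE.
  case: (eqVneq t s) => [->|ne]; first by rewrite upd_in xa c0_anc.
  by rewrite upd_out.
rewrite mu_anchored /anchor_factor /other_anchor_prod -eF.
have -> : M (~: Fp x) (pin x) = M (~: Fp x) x.
  apply: eq_bigl => y; apply: eq_agree_on => t; rewrite !inE => tF.
  have ts : t != s by apply: contraNneq tF => ->.
  by rewrite upd_out.
have sF : s \in Fp x by rewrite inE.
rewrite (bigD1 s sF) /= mulrCA; congr (_ * (_ * _)).
apply: eq_big => [t|t]; first by rewrite in_setD1 andbC.
by move=> /andP [_ ts]; rewrite upd_out.
Qed.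

Lemma sum_mu_nonanchor (x : Xq Xt) :
  \sum_(c | c \notin anc s) mu (upd x s c)
  = other_anchor_prod x *
    (M (~: Fp (pin x)) (pin x) - anchored_mass (~: Fp (pin x)) (pin x)).
Proof.
set x' := pin x; set A := Fp x'.
have sA : s \in A by exact: anchor_players_pin.
have mu_upd c : c \notin anc s ->
    mu (upd x s c) = other_anchor_prod x *
      \sum_(z | agree_on (~: A) x' z && (z s == c)) mu z.
  move=> cn; set y := upd x s c.
  have eF : Fp y = A :\ s.
    apply/setP => t; rewrite !inE.
    case: (eqVneq t s) => [->|ne]; first by rewrite /y upd_in (negPf cn).
    by rewrite /y /x' !upd_out.
  rewrite mu_anchored eF mulrC; congr (_ * _).
    apply: eq_bigr => t; rewrite in_setD1 => /andP [ts _].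
    by rewrite /y /x' !upd_out.
  apply: eq_bigl => z; rewrite -agree_on_updl //.
  by apply: eq_agree_on => t _; rewrite /x' upd_upd.
rewrite (eq_bigr _ mu_upd) -big_distrr /=; congr (_ * _).
rewrite /marg_on (bigID (fun z : Xq Xt => z s \in anc s)) /=.
have -> : \sum_(z : Xq Xt | [forall t in ~: A, z t == x' t] && (z s \in anc s)) mu z
          = anchored_mass (~: A) x' by apply: eq_bigl => z; rewrite andbC.
rewrite [_ - _]addrC addKr.
rewrite (partition_big (fun z : Xq Xt => z s) (fun c => c \notin anc s)) /=; last first.
  by move=> z /andP [].
apply: eq_bigr => c cn; apply: eq_bigl => z.
case: (z s =P c) => [->|]; last by rewrite !andbF.
by rewrite cn !andbT.
Qed.

Lemma sum_mu_upd (x : Xq Xt) :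
  \sum_c mu (upd x s c)
  = anchor_factor x + other_anchor_prod x * indep_defect (~: Fp (pin x)) (pin x).
Proof.
rewrite (bigID (fun c => c \in anc s)) /= sum_mu_nonanchor.
have -> : \sum_(c | c \in anc s) mu (upd x s c) = anchor_mass s * anchor_factor x.
  rewrite anchor_massE big_distrl /=; apply: eq_bigr => c cA.
  by rewrite mu_anchor upd_in ?anchor_factor_upd.
rewrite /indep_defect /anchor_factor; ring.
Qed.

Lemma sum_mu_fibers (h : Xq Xt -> R) : (forall x d, h (upd x s d) = h x) ->
  \sum_x mu x * h x = \sum_(x : Xq Xt | x s == c0) (\sum_c mu (upd x s c)) * h x.
Proof.
move=> hI; rewrite (partition_big (fun x : Xq Xt => x s) predT) //=.
rewrite (eq_bigr (fun c => \sum_(x : Xq Xt | x s == c0) mu (upd x s c) * h x)).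
  by rewrite exchange_big /=; apply: eq_bigr => x _; rewrite big_distrl.
by move=> c _; rewrite (sum_fiber_upd _ s c c0); apply: eq_bigr => x _; rewrite hI.
Qed.

Lemma sum_mu_anchor_fibers (h : Xq Xt -> R) : (forall x d, h (upd x s d) = h x) ->
  \sum_(x : Xq Xt | x s \in anc s) mu x * h x
  = anchor_mass s * \sum_(x : Xq Xt | x s == c0) anchor_factor x * h x.
Proof.
move=> hI.
rewrite (partition_big (fun x : Xq Xt => x s) (fun c => c \in anc s)) //=.
rewrite anchor_massE big_distrl /=; apply: eq_bigr => c cA.
rewrite (eq_bigl (fun x : Xq Xt => x s == c)) => [|x]; last exact: andb_eqr.
rewrite (sum_fiber_upd _ s c c0) big_distrr /=; apply: eq_bigr => x _.
by rewrite mu_anchor ?upd_in // anchor_factor_upd hI mulrA.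
Qed.

Lemma indep_defect_agree (B : {set 'I_k}) (g x : Xq Xt) :
  agree_on B g x -> indep_defect B x = indep_defect B g.
Proof.
move=> /agree_onP H; rewrite /indep_defect /anchored_mass /marg_on.
congr (_ * _ - _).
  by apply: eq_bigl => z; apply: (eq_agree_on B x g z) => t tB; rewrite H.
apply: eq_bigl => z; congr (_ && _).
by apply: (eq_agree_on B x g z) => t tB; rewrite H.
Qed.

(* Only the configurations anchored exactly off B survive; their weights are
   products of anchor masses, which are at most 1. *)
Lemma sum_other_anchor_prod_le1 (B : {set 'I_k}) (g : Xq Xt) :
  s \notin B -> (forall t, t \in B -> g t \notin anc t) ->
  \sum_(x : Xq Xt | x s == c0)
     other_anchor_prod x * (agree_on B g x)%:R * (~: Fp x == B)%:R <= 1.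
Proof.
move=> sB gB; set A := ~: B :\ s; set g' := upd g s c0.
pose hh t (d : Xt t) := if d \in anc t then m1 t d else 0.
have hh_ge0 t d : 0 <= hh t d by rewrite /hh; case: ifP => // _; apply: marg1_ge0.
apply: (@le_trans _ _ (\sum_(x | agree_on (~: A) g' x) \prod_(t in A) hh t (x t))).
  rewrite big_mkcond [X in _ <= X]big_mkcond; apply: ler_sum => x _.
  have rge0 : 0 <= if agree_on (~: A) g' x then \prod_(t in A) hh t (x t) else 0.
    by case: ifP => // _; apply: prodr_ge0 => t _; apply: hh_ge0.
  case: ifP => [/eqP xs|_] //.
  case hag: (agree_on B g x); last by rewrite mulr0 mul0r.
  case: (eqVneq (~: Fp x) B) => [e|]; last by rewrite mulr0.
  have xsx : pin x = x by rewrite -xs upd_id.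
  have FB : Fp x = ~: B by rewrite -e setCK.
  have -> : agree_on (~: A) g' x.
    apply/agree_onP => t; rewrite !inE negb_and !negbK => /orP [/eqP -> | tB].
      by rewrite /g' upd_in.
    have ts : t != s by apply: contraNneq sB => <-.
    by rewrite /g' upd_out //; move/agree_onP: hag => ->.
  rewrite /= !mulr1 /other_anchor_prod xsx FB le_eqVlt; apply/orP; left.
  apply/eqP; apply: eq_bigr => t tA.
  have : t \in Fp x by rewrite FB; move: tA; rewrite in_setD1 => /andP [].
  by rewrite inE /hh => ->.
rewrite sum_agree_on_prod; apply: prodr_ile1 => t _; apply/andP; split.
  by apply: sumr_ge0 => d _; apply: hh_ge0.
rewrite (_ : \sum_c hh t c = anchor_mass t); first exact: anchor_mass_le1.
by rewrite anchor_massE [in RHS]big_mkcond.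
Qed.

Lemma indep_defect_fibers (B : {set 'I_k}) (g : Xq Xt) : s \notin B ->
  indep_defect B g = anchor_mass s * \sum_(x : Xq Xt | x s == c0)
    other_anchor_prod x * indep_defect (~: Fp (pin x)) (pin x) * (agree_on B g x)%:R.
Proof.
move=> sB; pose h (x : Xq Xt) := (agree_on B g x)%:R : R.
have hI x d : h (upd x s d) = h x by rewrite /h agree_on_updr.
rewrite {1}/indep_defect /anchored_mass sum_andb_nat /marg_on big_mkcond /=.
rewrite (eq_bigr (fun x => mu x * h x)) => [|x _]; last first.
  by rewrite /h /agree_on; case: ifP; rewrite ?mulr1 ?mulr0.
rewrite (sum_mu_fibers _ hI) (sum_mu_anchor_fibers _ hI) -mulrBr -sumrB.
by congr (_ * _); apply: eq_bigr => x _; rewrite sum_mu_upd; ring.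
Qed.

Lemma agree_on_nonanchor {B : {set 'I_k}} {g x : Xq Xt} :
  (forall t, t \in B -> g t \notin anc t) -> agree_on B g x -> B \subset ~: Fp x.
Proof. by move=> gB /agree_onP xg; apply/subsetP => t tB; rewrite !inE xg // gB. Qed.

Hypothesis anchor_mass_lt1 : anchor_mass s < 1.

(* In indep_defect_fibers, the configurations whose non-anchored set is
   strictly larger than B contribute 0 by induction, and the others reproduce
   the defect of B with a factor anchor_mass s * c < 1. *)
Lemma indep_defect_eq0 (B : {set 'I_k}) (g : Xq Xt) :
  s \notin B -> (forall t, t \in B -> g t \notin anc t) -> indep_defect B g = 0.
Proof.
move: {2}#|~: B| (leqnn #|~: B|) => n; elim: n B g => [|n IH] B g cB sB gB.
  by move: cB sB; rewrite leqn0 cards_eq0 -in_setC => /eqP ->; rewrite inE.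
set c := \sum_(x : Xq Xt | x s == c0)
  other_anchor_prod x * (agree_on B g x)%:R * (~: Fp x == B)%:R.
have fixpoint : indep_defect B g = anchor_mass s * (indep_defect B g * c).
  rewrite {1}(indep_defect_fibers _ _ sB); congr (_ * _); rewrite /c big_distrr /=.
  apply: eq_bigr => x /eqP xs; have -> : pin x = x by rewrite -xs upd_id.
  case hag: (agree_on B g x); last by rewrite !mulr0 mul0r mulr0.
  case: (eqVneq (~: Fp x) B) => [->|ne].
    by rewrite (indep_defect_agree _ _ _ hag) /=; ring.
  rewrite IH ?mulr0 ?mul0r //.
  - rewrite -ltnS (leq_trans _ cB) // proper_card // properC properEneq.
    by rewrite eq_sym ne (agree_on_nonanchor gB hag).
  - by rewrite !inE negbK xs.
  - by move=> t; rewrite !inE.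
have c_ge0 : 0 <= c.
  apply: sumr_ge0 => x _; rewrite !mulr_ge0 ?ler0n //.
  by apply: prodr_ge0 => t _; apply: marg1_ge0.
have lt1 : anchor_mass s * c < 1.
  apply: le_lt_trans anchor_mass_lt1; rewrite ler_piMr ?anchor_mass_ge0 //.
  exact: sum_other_anchor_prod_le1.
have /eqP : indep_defect B g * (1 - anchor_mass s * c) = 0.
  by rewrite mulrBr mulr1 {1}fixpoint mulrCA mulrA subrr.
rewrite mulf_eq0 => /orP [/eqP // |].
by rewrite subr_eq0 => /eqP e; move: lt1; rewrite -e ltxx.
Qed.

End OneAnchor.

Lemma anchor_indep s (E : pred (Xq Xt)) : (forall x d, E (upd x s d) = E x) ->
  \sum_(x : Xq Xt | (x s \in anc s) && E x) mu x = anchor_mass s * \sum_(x | E x) mu x.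
Proof.
move=> EI.
have [al1|alneq] := eqVneq (anchor_mass s) 1.
  have mu0 : forall x : Xq Xt, x s \notin anc s -> mu x = 0.
    apply: psumr_eq0P => [x _|]; first exact: mu_ge0.
    move: mu_sum; rewrite (bigID (fun x : Xq Xt => x s \in anc s)) /=.
    by rewrite -/(anchor_mass s) al1 => H; lra.
  rewrite al1 mul1r [RHS](bigID (fun x : Xq Xt => x s \in anc s)) /=.
  rewrite [X in _ = _ + X]big1 ?addr0 => [|x /andP [_ /mu0] //].
  by apply: eq_bigl => x; rewrite andbC.
have al_lt1 : anchor_mass s < 1 by rewrite lt_neqAle alneq anchor_mass_le1.
case: (pickP (fun c : Xt s => c \in anc s)) => [c0 hc0 | none]; last first.
  rewrite big_pred0 => [|x]; last by rewrite none.
  by rewrite /anchor_mass big_pred0 ?mul0r // => x; rewrite none.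
pose e (x : Xq Xt) := (E x)%:R : R.
have eI x d : e (upd x s d) = e x by rewrite /e EI.
rewrite sum_andb_nat (sum_mu_anchor_fibers s c0 hc0 _ eI).
have -> : \sum_(x | E x) mu x = \sum_x mu x * e x.
  rewrite big_mkcond; apply: eq_bigr => x _; rewrite /e.
  by case: (E x); rewrite ?mulr1 ?mulr0.
rewrite (sum_mu_fibers s c0 _ eI); congr (_ * _); apply: eq_bigr => x _.
rewrite (sum_mu_upd s c0 hc0) (indep_defect_eq0 s c0 hc0 al_lt1) ?mulr0 ?addr0 //.
- by rewrite inE negbK anchor_players_pin.
- by move=> t; rewrite !inE.
Qed.

Definition Yof (x : Xq Xt) : Yq Xt :=
  finfun (fun t => if x t \in anc t then None else Some (x t)).

Lemma Yof_eq_None (x : Xq Xt) s : (Yof x s == None) = (x s \in anc s).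
Proof. by rewrite ffunE; case: ifP. Qed.

Lemma erase_Yof_upd (S : {set 'I_k}) (x : Xq Xt) s (d : Xt s) :
  s \in S -> erase S (Yof (upd x s d)) = erase S (Yof x).
Proof.
move=> sS; apply/ffunP => t; rewrite !eraseE !ffunE.
case: ifP => // tS; have ts : t != s by apply: contraFneq tS => ->.
by rewrite dfwith_out // eq_sym.
Qed.

Lemma erase_mass_ratio (alpha : R) : 0 <= alpha -> (forall s, alpha <= anchor_mass s) ->
  forall (S : {set 'I_k}) (a : Yq Xt),
  alpha ^+ #|S| * \sum_(x | erase S (Yof x) == a) mu x <= \sum_(x | Yof x == a) mu x.
Proof.
move=> ha hal S a.
have rge0 : 0 <= \sum_(x | Yof x == a) mu x by apply: sumr_ge0.
have [/forall_inP aS | /forall_inPn [s sS asn]] := boolP [forall s in S, a s == None];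
  last first.
  rewrite big_pred0 ?mulr0 // => x; apply/negbTE; apply: contra asn => /eqP <-.
  by rewrite eraseE sS.
move: {2}#|S| (erefl #|S|) => n; elim: n S aS => [|n IH] S aS cS.
  have -> : S = set0 by apply/eqP; rewrite -cards_eq0 cS.
  rewrite cards0 expr0 mul1r (eq_bigl (fun x => Yof x == a)) => [|x]; first exact: lexx.
  by rewrite erase_set0.
have [s sS] : exists s, s \in S by apply/set0Pn; rewrite -cards_eq0 cS.
have cS' : #|S :\ s| = n by move: cS; rewrite (cardsD1 s S) sS add1n => -[].
have aS' t : t \in S :\ s -> a t == None by rewrite in_setD1 => /andP [_ /aS].
have as0 : a s = None by apply/eqP; apply: aS.
have EE x : (erase (S :\ s) (Yof x) == a) = (x s \in anc s) && (erase S (Yof x) == a).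
  by rewrite erase_setD1 // Yof_eq_None.
have EI x d : (erase S (Yof (upd x s d)) == a) = (erase S (Yof x) == a).
  by rewrite erase_Yof_upd.
have := IH (S :\ s) aS' cS'; rewrite (eq_bigl _ _ EE) (anchor_indep s _ EI).
rewrite cS'; apply: le_trans; rewrite cS exprS -mulrA mulrCA.
apply: ler_wpM2l; first exact: exprn_ge0.
by apply: ler_wpM2r; [apply: sumr_ge0 | exact: hal].
Qed.

End Anchored.

Section Distances.
Context {R : realFieldType}.

Lemma eq_tvd {T : finType} {P P' Q Q' : T -> R} :
  P =1 P' -> Q =1 Q' -> tvd P Q = tvd P' Q'.
Proof. by move=> eP eQ; congr (_ * _); apply: eq_bigr => p _; rewrite eP eQ. Qed.

Lemma tvd_mix {Y U : finType} (P : Y -> R) (G H : Y -> U -> R) :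
  (forall y, 0 <= P y) ->
  tvd (fun p : Y * U => P p.1 * G p.1 p.2) (fun p => P p.1 * H p.1 p.2)
  = 2^-1 * \sum_y P y * \sum_v `|G y v - H y v|.
Proof.
move=> P0; congr (_ * _).
transitivity (\sum_y \sum_v `|P y * G y v - P y * H y v|).
  by rewrite pair_bigA; apply: eq_bigr => -[y v].
apply: eq_bigr => y _; rewrite big_distrr; apply: eq_bigr => v _.
by rewrite -mulrBr normrM ger0_norm.
Qed.

Lemma tvd_mix_comp_le {Y U : finType} {P : Y -> R} {G H : Y -> U -> R} {e1 e2 : Y -> Y} :
  (forall y, 0 <= P y) -> (forall y, H (e1 y) =1 H (e2 y)) ->
  tvd (fun p : Y * U => P p.1 * G (e1 p.1) p.2) (fun p => P p.1 * G (e2 p.1) p.2)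
  <= 2^-1 * \sum_y P y * (\sum_v `|G (e1 y) v - H (e1 y) v|
                        + \sum_v `|G (e2 y) v - H (e2 y) v|).
Proof.
move=> P0 eH; rewrite (tvd_mix P (fun y => G (e1 y)) (fun y => G (e2 y)) P0).
rewrite ler_wpM2l ?invr_ge0 ?ler0n //; apply: ler_sum => y _.
rewrite ler_wpM2l // -big_split; apply: ler_sum => v _.
have := ler_normB (G (e1 y) v - H (e1 y) v) (G (e2 y) v - H (e1 y) v).
by rewrite opprB addrA subrK -(eH y v).
Qed.

End Distances.

Lemma exprVn_leS {R : numFieldType} {a : R} n : 0 < a -> a <= 1 -> a ^- n <= a ^- n.+1.
Proof.
by move=> a0 a1; rewrite exprSr invfM ler_peMr ?invf_ge1 // invr_ge0 exprn_ge0 // ltW.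
Qed.

Section Rounds.
Context {R : realFieldType} {k : nat} (Xt At : 'I_k -> finType)
  (n m : nat) (mu : Xq Xt -> R) (anc : forall t, {set Xt t})
  (V : Xq Xt -> Aq At -> bool)
  (f : forall t : 'I_k, {ffun 'I_n -> Xt t} -> {ffun 'I_n -> At t}).
Hypothesis mu_ge0 : forall x, 0 <= mu x.
Hypothesis mu_sum : \sum_x mu x = 1.

Definition Dmass : R :=
  \sum_(w2 : {ffun 'I_m -> {set 'I_k}}) \prod_(l : 'I_m) Dweight (w2 l).

Lemma Dweight_ge0 (D : {set 'I_k}) : 0 <= Dweight D :> R.
Proof. by rewrite /Dweight; case: ifP => // _; rewrite invr_ge0 ler0n. Qed.

Lemma Dmass_ge0 : 0 <= Dmass.
Proof. by apply: sumr_ge0 => w2 _; apply: prodr_ge0 => l _; apply: Dweight_ge0. Qed.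

Lemma Pr_ge0 (E : pred (Omega Xt n m)) : 0 <= Pr m mu E.
Proof.
apply: sumr_ge0 => w _; apply: mulr_ge0; apply: prodr_ge0 => j _;
  [exact: mu_ge0 | exact: Dweight_ge0].
Qed.

Lemma Pr_round (i : 'I_n) (E : pred (Xq Xt)) :
  Pr m mu (fun w => E (w.1 i)) = (\sum_(x | E x) mu x) * Dmass.
Proof.
rewrite /Pr big_mkcond /=.
transitivity (\sum_(w1 : {ffun 'I_n -> Xq Xt}) \sum_(w2 : {ffun 'I_m -> {set 'I_k}})
   (if E (w1 i) then (\prod_(j : 'I_n) mu (w1 j)) * \prod_(l : 'I_m) Dweight (w2 l) else 0)).
  by rewrite pair_bigA.
rewrite (eq_bigr (fun w1 : {ffun 'I_n -> Xq Xt} =>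
   (if E (w1 i) then \prod_(j : 'I_n) mu (w1 j) else 0) * Dmass)) => [|w1 _]; last first.
  by rewrite /Dmass; case: (E (w1 i)); [rewrite big_distrr | rewrite mul0r big1].
rewrite -big_distrl /=; congr (_ * _).
pose F (j : 'I_n) (x : Xq Xt) := if j == i then (if E x then mu x else 0) else mu x.
transitivity (\sum_(w1 : {ffun 'I_n -> Xq Xt}) \prod_(j : 'I_n) F j (w1 j)).
  apply: eq_bigr => w1 _; rewrite (bigD1 i) //= [RHS](bigD1 i) //=.
  have -> : F i (w1 i) = (if E (w1 i) then mu (w1 i) else 0) by rewrite /F eqxx.
  rewrite (eq_bigr (fun j => F j (w1 j))) => [|j /negPf ji]; last by rewrite /F ji.
  by case: (E (w1 i)); rewrite ?mul0r.
rewrite -bigA_distr_bigA (bigD1 i) //= [X in _ * X]big1 ?mulr1 => [|j /negPf ji].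
  by rewrite [RHS]big_mkcond; apply: eq_bigr => x _; rewrite /F eqxx.
by rewrite -mu_sum; apply: eq_bigr => x _; rewrite /F ji.
Qed.

Local Notation PY := (PY Xt n m mu anc).

Lemma PYE (i : 'I_n) y : PY i y = (\sum_(x | Yof Xt anc x == y) mu x) * Dmass.
Proof. by rewrite -(Pr_round i (fun x => Yof Xt anc x == y)) /PY /Pr; apply: eq_bigl. Qed.

Hypothesis mu_anchored : forall x,
  mu x = marg_on Xt mu (~: anchor_players Xt anc x) x *
         \prod_(t in anchor_players Xt anc x) marg1 Xt mu t (x t).

Lemma sum_PY_erase_le (alpha : R) (i : 'I_n) (phi : Yq Xt -> R) (S : {set 'I_k}) :
  0 < alpha -> (forall s, alpha <= anchor_mass Xt mu anc s) -> (forall y, 0 <= phi y) ->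
  \sum_y PY i y * phi (erase S y) <= alpha ^- #|S| * \sum_y PY i y * phi y.
Proof.
move=> a0 hal phi0.
rewrite (partition_big (erase S) predT) //= big_distrr /=.
apply: ler_sum => a _.
rewrite (eq_bigr (fun y => PY i y * phi a)) => [|y /eqP ->] //.
rewrite -big_distrl /= mulrA; apply: ler_wpM2r; first exact: phi0.
have -> : \sum_(y | erase S y == a) PY i y
    = Pr m mu (fun w => erase S (Yof Xt anc (w.1 i)) == a).
  rewrite /Pr (partition_big (fun w : Omega Xt n m => Yof Xt anc (w.1 i))
                 (fun y => erase S y == a)) //=.
  apply: eq_bigr => y ya; rewrite /PY /Pr; apply: eq_bigl => w /=.
  by rewrite (andb_eqr _ (fun z => erase S z == a)).
rewrite (Pr_round i (fun x => erase S (Yof Xt anc x) == a)) PYE mulrA.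
apply: ler_wpM2r; first exact: Dmass_ge0.
have ratio := erase_mass_ratio Xt mu anc mu_ge0 mu_sum mu_anchored alpha (ltW a0) hal S a.
have an0 : alpha ^+ #|S| != 0 by rewrite expf_neq0 // gt_eqF.
rewrite -[X in X <= _](mulKf an0) ler_wpM2l //.
by rewrite invr_ge0 exprn_ge0 // ltW.
Qed.

Local Notation Pcond := (Pcond Xt At n m mu anc V f).
Local Notation condEv := (condEv Xt At n m anc V f).

Lemma eq_Pcond {i : 'I_n} {S T S' T' y y'} :
  condEv i S T y =1 condEv i S' T' y' -> Pcond i S T y =1 Pcond i S' T' y'.
Proof.
by move=> H v; rewrite /Pcond; congr (_ / _); apply: eq_bigl => w /=; rewrite H.
Qed.

Lemma condEv_erase (i : 'I_n) (S : {set 'I_k}) y :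
  condEv i S (~: S) y =1 condEv i set0 setT (erase S y).
Proof.
move=> w; rewrite /condEv; congr (_ && _); apply/andP/andP.
  move=> [/forall_inP H1 /forall_inP H2]; split; first by apply/forall_inP => s; rewrite inE.
  apply/forall_inP => s _; rewrite eraseE; case: ifP => sS; first exact: H1.
  by apply: H2; rewrite inE sS.
move=> [_ /forall_inP H]; split.
  by apply/forall_inP => s sS; have := H s (in_setT s); rewrite eraseE sS.
apply/forall_inP => s; rewrite inE => /negPf sS.
by have := H s (in_setT s); rewrite eraseE sS.
Qed.

Lemma mixture_erase (i : 'I_n) (S : {set 'I_k}) (p : Yq Xt * OZVal Xt At n) :
  mixture m mu anc V f i S (~: S) p = PY i p.1 * Pcond i set0 setT (erase S p.1) p.2.
Proof. by rewrite /mixture (eq_Pcond (condEv_erase i S p.1)). Qed.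

Lemma Pcond_setC1_erase (i : 'I_n) (S : {set 'I_k}) t y :
  Pcond i set0 [set~ t] (erase S y) =1 Pcond i set0 [set~ t] (erase (t |: S) y).
Proof.
apply: eq_Pcond => w; rewrite /condEv; congr (_ && (_ && _)).
apply/forall_inP/forall_inP => H s hs; have := H s hs; move: hs;
  by rewrite !inE => st; rewrite !eraseE in_setU1 (negPf st).
Qed.

End Rounds.

Theorem lemma4p6 (R : realFieldType) (k : nat) (Xt At : 'I_k -> finType)
  (mu : Xq Xt -> R) (anc : forall t : 'I_k, {set Xt t}) (alpha : R)
  (V : Xq Xt -> Aq At -> bool) (n m : nat)
  (f : forall t : 'I_k, {ffun 'I_n -> Xt t} -> {ffun 'I_n -> At t}) :
  is_distr mu -> anchored mu anc alpha ->
  (1 <= m)%N -> (m < n)%N ->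
  0 < Pr m mu (Wev m V f) ->
  forall (i : 'I_n) (S : {set 'I_k}) (t : 'I_k),
  (i < m)%N -> t \notin S ->
  tvd (mixture m mu anc V f i S (~: S))
      (mixture m mu anc V f i (t |: S) (~: S :\ t))
  <= 2 * alpha ^- (#|S|.+1) *
     tvd (mixture m mu anc V f i set0 setT)
         (mixture m mu anc V f i set0 [set~ t]).
Proof.
move=> [mu0 mu1] [/andP [a0 a1] hal hmu] _ _ _ i S t _ tS.
set P := PY Xt n m mu anc i.
set G := Pcond Xt At n m mu anc V f i set0 setT.
set H := Pcond Xt At n m mu anc V f i set0 [set~ t].
have P0 y : 0 <= P y by apply: Pr_ge0.
have bound T : \sum_y P y * (\sum_v `|G (erase T y) v - H (erase T y) v|)
    <= alpha ^- #|T| * \sum_y P y * \sum_v `|G y v - H y v|.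
  apply: (sum_PY_erase_le Xt n m mu anc mu0 mu1 hmu alpha i
           (fun y => \sum_v `|G y v - H y v|) T a0 hal) => y.
  exact: sumr_ge0.
have -> : ~: S :\ t = ~: (t |: S) by apply/setP => s; rewrite !inE negb_or andbC.
rewrite (eq_tvd (mixture_erase Xt At n m mu anc V f i S)
                (mixture_erase Xt At n m mu anc V f i (t |: S))).
apply: le_trans (tvd_mix_comp_le P0 (Pcond_setC1_erase Xt At n m mu anc V f i S t)) _.
rewrite [X in _ <= _ * X](tvd_mix P G H P0).
under eq_bigr do rewrite mulrDr.
rewrite big_split /= -/G -/H.
move: (bound S) (bound (t |: S)); rewrite cardsU1 tS add1n.
set X := \sum_y P y * \sum_v `|G y v - H y v|.
have X0 : 0 <= X by apply: sumr_ge0 => y _; rewrite mulr_ge0 // sumr_ge0.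
have uv := exprVn_leS #|S| a0 a1.
have vuX : 0 <= (alpha ^- #|S|.+1 - alpha ^- #|S|) * X by rewrite mulr_ge0 // subr_ge0.
nra.
Qed.
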